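(* A weighted game $\mathcal G$ is divergent if and only if, in each strongly connected component of the graph of $\mathcal G$, the simple cycles are either all of positive weight or all of negative weight.
   Context: A weighted game is a tuple $\langle V=V_{\mathrm{Min}}\uplus V_{\mathrm{Max}}, V_T, A, E, \omega\rangle$ with vertices $V$ split between two players, targets $V_T\subseteq V_{\mathrm{Min}}$, alphabet $A$, edges $E\subseteq V\times A\times V$ and weights $\omega\colon E\to\mathbb Z$; its graph is the directed graph $(V,E)$ (strongly connected components do not depend on the partition of vertices between players). A cycle is a finite sequence of consecutive edges $v_0\xrightarrow{a_0}v_1\cdots\xrightarrow{a_{k-1}}v_k$ with $k\geq 1$ and $v_k=v_0$; its weight is the sum of the weights of its edges; it is simple if no vertex is visited twice except $v_0=v_k$. The game is divergent if every cycle has nonzero weight. *)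

From mathcomp Require Import all_boot all_order all_algebra.
Set Implicit Arguments. Unset Strict Implicit. Unset Printing Implicit Defensive.
Import Order.TTheory GRing.Theory Num.Theory.
Local Open Scope ring_scope.

(* A (finite) weighted game <V = V_Min ⊎ V_Max, V_T, A, E, ω>.
   V_Max is the complement of V_Min; weights are given on all triples but only
   those on edges matter. *)
Record wgame (V A : finType) := WGame {
  vmin : {set V};
  vtarget : {set V};
  edges : {set V * A * V};
  weight : V * A * V -> int;
}.

Definition vmax (V A : finType) (G : wgame V A) : {set V} := ~: vmin G.

Definition wgame_wf (V A : finType) (G : wgame V A) : Prop :=
  vtarget G \subset vmin G.

Definition esrc (V A : finType) (e : V * A * V) : V := e.1.1.
Definition edst (V A : finType) (e : V * A * V) : V := e.2.

Definition grel_of (V A : finType) (G : wgame V A) : rel V :=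
  fun u v => [exists a : A, (u, a, v) \in edges G].

Fixpoint consecutive (V A : finType) (c : seq (V * A * V)) : bool :=
  match c with
  | e1 :: ((e2 :: _) as c') => (edst e1 == esrc e2) && consecutive c'
  | _ => true
  end.

Definition is_cycle (V A : finType) (G : wgame V A) (c : seq (V * A * V)) : bool :=
  match c with
  | [::] => false
  | e0 :: _ => all (fun e => e \in edges G) c && consecutive c
               && (edst (last e0 c) == esrc e0)
  end.

Definition is_simple_cycle (V A : finType) (G : wgame V A) (c : seq (V * A * V)) : bool :=
  is_cycle G c && uniq (map (@esrc V A) c).

Definition cycle_weight (V A : finType) (G : wgame V A) (c : seq (V * A * V)) : int :=
  \sum_(e <- c) weight G e.

Definition divergent (V A : finType) (G : wgame V A) : Prop :=
  forall c, is_cycle G c -> cycle_weight G c != 0.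

Definition same_scc (V A : finType) (G : wgame V A) (u v : V) : bool :=
  connect (grel_of G) u v && connect (grel_of G) v u.

Definition cycle_in_scc (V A : finType) (G : wgame V A) (v : V) (c : seq (V * A * V)) : bool :=
  all (fun e => same_scc G v (esrc e)) c.

From mathcomp Require Import all_boot all_order all_algebra.
From mathcomp Require Import zify.
From Stdlib Require Import Classical.
Set Implicit Arguments. Unset Strict Implicit. Unset Printing Implicit Defensive.
Import Order.TTheory GRing.Theory Num.Theory.
Local Open Scope ring_scope.

(* A closed walk that revisits a vertex splits into two shorter closed walks,
   so its weight is a sum of weights of simple cycles made of its own edges,
   all lying in the strongly connected component of its start vertex: if these
   all have one sign, so does every cycle.  Conversely, in a divergent game two
   closed walks of weights a and b through a common vertex have the same sign,
   for otherwise going |b| times around the first and |a| times around the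
   second gives a cycle of weight a|b| + b|a| = 0.  Detouring along a path to
   another vertex of the component and back transports this sign to all closed
   walks of the component. *)

Lemma cross_mulr_norm_eq0 (R : realDomainType) (a b : R) :
  (0 < a) != (0 < b) -> a * `|b| + b * `|a| = 0.
Proof.
case: (ltrgt0P a) => [a_gt0|a_lt0|->]; case: (ltrgt0P b) => [b_gt0|b_lt0|->] //;
  rewrite ?mulr0 ?mul0r ?addr0 // => _.
- by rewrite mulrN mulrC addNr.
- by rewrite mulrN mulrC subrr.
Qed.

Section Walks.
Variables (V A : finType) (G : wgame V A).
Implicit Types (x y z s : V) (e : V * A * V) (W : seq (V * A * V)).

Fixpoint walk x W y : bool :=
  if W is e :: W' then [&& e \in edges G, esrc e == x & walk (edst e) W' y]
  else x == y.

Lemma walk_cat x y z W1 W2 : walk x W1 y -> walk y W2 z -> walk x (W1 ++ W2) z.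
Proof.
elim: W1 x => [|e W1 IHW] x /=; first by move/eqP->.
by case/and3P=> -> -> /IHW W12 /W12->.
Qed.

Lemma walk_cat_inv x z W1 W2 :
  walk x (W1 ++ W2) z -> exists y, walk x W1 y /\ walk y W2 z.
Proof.
elim: W1 x => [|e W1 IHW] x /=; first by exists x; rewrite eqxx.
by case/and3P=> eE ex /IHW[y [W1y W2y]]; exists y; rewrite eE ex W1y.
Qed.

Lemma walk_consE x e W y :
  walk x (e :: W) y =
  [&& all (fun e => e \in edges G) (e :: W), consecutive (e :: W),
      esrc e == x & edst (last e W) == y].
Proof.
elim: W x e => [|e' W IHW] x e; first by rewrite /= andbT.
transitivity [&& e \in edges G, esrc e == x & walk (edst e) (e' :: W) y] => //.
rewrite IHW /= -/(consecutive (e' :: W)) (eq_sym (esrc e')).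
by case: (e \in _); case: (esrc e == x); case: (edst e == _);
  case: (consecutive _); rewrite /= ?andbF.
Qed.

Lemma is_cycle_walk e W : is_cycle G (e :: W) = walk (esrc e) (e :: W) (esrc e).
Proof. by rewrite walk_consE eqxx /= !andbA. Qed.

Lemma closed_walk_is_cycle s W : walk s W s -> W != [::] -> is_cycle G W.
Proof.
case: W => [//|e W] eWs _; rewrite is_cycle_walk.
by case/and3P: (eWs) => _ /eqP->.
Qed.

Lemma connect_walkP x y : reflect (exists W, walk x W y) (connect (grel_of G) x y).
Proof.
apply: (iffP connectP) => [[p]|[W]].
  elim: p x => [|z p IHp] x /= => [_ ->|/andP[/existsP[a xaz] /IHp Wp /Wp[W Wz]]].
    by exists [::]; rewrite /= eqxx.
  by exists ((x, a, z) :: W); rewrite /= xaz eqxx.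
elim: W x => [|[[u a] w] W IHW] x /=; first by move/eqP->; exists [::].
case/and3P=> uaw /eqP ux /IHW[p wp ->]; rewrite /esrc /= in ux; subst u.
by exists (w :: p); rewrite //= wp andbT; apply/existsP; exists a.
Qed.

Lemma closed_walk_in_scc s W : walk s W s -> cycle_in_scc G s W.
Proof.
move=> Ws; apply/allP=> e e_W; move: Ws; case/splitPr: e_W => W1 W2.
case/walk_cat_inv=> z [W1z W2z]; case/and3P: (W2z) => _ /eqP-> _.
by rewrite /same_scc; apply/andP; split; apply/connect_walkP; [exists W1 | exists (e :: W2)].
Qed.

Lemma walk_split_at x W y z :
  walk x W y -> z \in map (@esrc V A) W ->
  exists W1 W2, [/\ W = W1 ++ W2, W2 != [::], walk x W1 z & walk z W2 y].
Proof.
elim: W x => [//|e W IHW] x /= /and3P[eE /eqP ex Wy]; rewrite in_cons.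
case/orP=> [/eqP->|/(IHW _ Wy)[W1 [W2 [-> W2_nil W1z W2y]]]].
  by exists [::], (e :: W); rewrite /= eE ex !eqxx Wy.
by exists (e :: W1), W2; rewrite /= eE ex eqxx W1z.
Qed.

Lemma walk_split_repeat x W y :
  walk x W y -> ~~ uniq (map (@esrc V A) W) ->
  exists W1 W2 W3 z, [/\ W = W1 ++ W2 ++ W3, W2 != [::], W1 ++ W3 != [::],
                         walk z W2 z & walk x (W1 ++ W3) y].
Proof.
elim: W x => [//|e W IHW] x /= /and3P[eE /eqP ex Wy]; subst x.
rewrite negb_and negbK => /orP[/(walk_split_at Wy)[W1 [W2 [-> W2_nil W1e W2y]]]|].
  by exists [::], (e :: W1), W2, (esrc e); rewrite /= eE eqxx W1e W2y.
case/(IHW _ Wy)=> W1 [W2 [W3 [z [-> W2_nil _ W2z W13y]]]].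
by exists (e :: W1), W2, W3, z; rewrite /= eE eqxx W13y.
Qed.

Lemma cycle_weight_cat W1 W2 :
  cycle_weight G (W1 ++ W2) = cycle_weight G W1 + cycle_weight G W2.
Proof. exact: big_cat. Qed.

Lemma closed_walk_weight_ind (P : int -> Prop) :
  (forall a b, P a -> P b -> P (a + b)) ->
  forall s W, walk s W s -> W != [::] ->
  (forall c, is_simple_cycle G c -> {subset c <= W} -> P (cycle_weight G c)) ->
  P (cycle_weight G W).
Proof.
move=> PD s W; elim: {W}_.+1 {-2}W (ltnSn (size W)) s => // n IHn W W_lt s.
move=> Ws W_nil simpleP; have [W_uniq|] := boolP (uniq (map (@esrc V A) W)).
  by apply: simpleP => //; rewrite /is_simple_cycle W_uniq (closed_walk_is_cycle Ws W_nil).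
case/(walk_split_repeat Ws)=> W1 [W2 [W3 [z [WE W2_nil W13_nil W2z W13s]]]].
have W2_gt0 : (0 < size W2)%N by rewrite lt0n size_eq0.
have W13_gt0 : (0 < size (W1 ++ W3))%N by rewrite lt0n size_eq0.
have [W2_lt W13_lt] : (size W2 < n)%N /\ (size (W1 ++ W3) < n)%N.
  have W_size : size W = (size W2 + size (W1 ++ W3))%N by rewrite WE !size_cat addnCA.
  by move: W_lt W2_gt0 W13_gt0; rewrite W_size; clear; lia.
have W2_sub : {subset W2 <= W} by move=> e e_W2; rewrite WE !mem_cat e_W2 orbT.
have W13_sub : {subset W1 ++ W3 <= W}.
  by move=> e; rewrite WE !mem_cat => /orP[] ->; rewrite ?orbT.
have -> : cycle_weight G W = cycle_weight G W2 + cycle_weight G (W1 ++ W3).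
  by rewrite WE !cycle_weight_cat addrCA.
apply: PD.
- apply: (IHn _ _ z) => // c c_simple c_sub.
  by apply: simpleP => // e /c_sub /W2_sub.
- apply: (IHn _ _ s) => // c c_simple c_sub.
  by apply: simpleP => // e /c_sub /W13_sub.
Qed.

Lemma walk_flatten_nseq s W n : walk s W s -> walk s (flatten (nseq n W)) s.
Proof. by move=> Ws; elim: n => [|n IHn] /=; [exact: eqxx | exact: walk_cat Ws IHn]. Qed.

Lemma cycle_weight_flatten_nseq W n :
  cycle_weight G (flatten (nseq n W)) = cycle_weight G W *+ n.
Proof.
elim: n => [|n IHn]; first exact: big_nil.
by rewrite /= cycle_weight_cat IHn mulrS.
Qed.

Hypothesis divG : divergent G.

Lemma divergent_closed_walks_same_sign s W1 W2 :
  walk s W1 s -> walk s W2 s -> W1 != [::] -> W2 != [::] ->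
  (0 < cycle_weight G W1) = (0 < cycle_weight G W2).
Proof.
move=> W1s W2s W1_nil W2_nil.
set a := cycle_weight G W1; set b := cycle_weight G W2.
have b_neq0 : b != 0 := divG (closed_walk_is_cycle W2s W2_nil).
set W := flatten (nseq `|b|%N W1) ++ flatten (nseq `|a|%N W2).
have W_cycle : is_cycle G W.
  apply: (closed_walk_is_cycle (s := s)).
    by apply: walk_cat; apply: walk_flatten_nseq.
  have : (0 < `|b|)%N by rewrite absz_gt0.
  by rewrite /W; case: `|b|%N => // k _; case: (W1) W1_nil.
apply/eqP; apply: contraNT (divG W_cycle) => sign_ab.
rewrite cycle_weight_cat !cycle_weight_flatten_nseq -[a *+ _]mulr_natr -[b *+ _]mulr_natr.
by rewrite !natz !abszE cross_mulr_norm_eq0.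
Qed.

Lemma divergent_connected_closed_walks_same_sign s1 s2 W1 W2 :
  connect (grel_of G) s1 s2 -> connect (grel_of G) s2 s1 ->
  walk s1 W1 s1 -> walk s2 W2 s2 -> W1 != [::] -> W2 != [::] ->
  (0 < cycle_weight G W1) = (0 < cycle_weight G W2).
Proof.
move=> /connect_walkP[P Ps] /connect_walkP[Q Qs] W1s W2s W1_nil W2_nil.
have [PQ_nil|PQ_nil] := eqVneq (P ++ Q) [::].
  case: P Ps PQ_nil => //= /eqP s12 _; rewrite -s12 in W2s.
  exact: divergent_closed_walks_same_sign W1s W2s W1_nil W2_nil.
have QP_nil : Q ++ P != [::] by case: (P) (Q) PQ_nil => [|? ?] [|? ?].
rewrite (divergent_closed_walks_same_sign W1s (walk_cat Ps Qs)) //.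
rewrite (divergent_closed_walks_same_sign W2s (walk_cat Qs Ps)) //.
by rewrite !cycle_weight_cat addrC.
Qed.

Lemma divergent_scc_cycles_same_sign v c1 c2 :
  is_cycle G c1 -> is_cycle G c2 -> cycle_in_scc G v c1 -> cycle_in_scc G v c2 ->
  (0 < cycle_weight G c1) = (0 < cycle_weight G c2).
Proof.
case: c1 => [//|e1 c1]; case: c2 => [//|e2 c2]; rewrite !is_cycle_walk.
move=> c1s c2s /andP[/andP[v1 e1v] _] /andP[/andP[v2 e2v] _].
exact: divergent_connected_closed_walks_same_sign
  (connect_trans e1v v2) (connect_trans e2v v1) c1s c2s _ _.
Qed.

End Walks.

Theorem proposition1 (V A : finType) (G : wgame V A) :
  wgame_wf G ->
  (divergent G <->
   forall v : V,
     (forall c, is_simple_cycle G c -> cycle_in_scc G v c -> 0 < cycle_weight G c) \/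
     (forall c, is_simple_cycle G c -> cycle_in_scc G v c -> cycle_weight G c < 0)).
Proof.
move=> _; split=> [divG v | scc_sign].
- have [[c0 [/andP[c0_cycle _] c0_scc c0_pos]] | no_pos] := classic
    (exists c0, [/\ is_simple_cycle G c0, cycle_in_scc G v c0 & 0 < cycle_weight G c0]).
    left=> c /andP[c_cycle _] c_scc.
    by rewrite (divergent_scc_cycles_same_sign divG c_cycle c0_cycle c_scc c0_scc).
  right=> c c_simple c_scc; case/andP: (c_simple) => /divG c_neq0 _.
  rewrite lt_neqAle c_neq0 leNgt; apply/negP=> c_pos.
  by apply: no_pos; exists c.
- case=> [//|e c]; rewrite is_cycle_walk => cs.
  have sub_scc c0 : {subset c0 <= e :: c} -> cycle_in_scc G (esrc e) c0.
    by move=> c0_sub; apply/allP=> e0 /c0_sub; apply: (allP (closed_walk_in_scc cs)).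
  case: (scc_sign (esrc e)) => [pos | neg].
  + rewrite gt_eqF //; apply: (closed_walk_weight_ind (P := fun w => 0 < w) _ cs) => //.
      exact: addr_gt0.
    by move=> c0 c0_simple /sub_scc; apply: pos.
  + rewrite lt_eqF //; apply: (closed_walk_weight_ind (P := fun w => w < 0) _ cs) => //.
      by move=> a b /ltr_nDl; apply.
    by move=> c0 c0_simple /sub_scc; apply: neg.
Qed.
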